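(* Let $(E,\mathcal{I})$ be a $p$-system for an integer $p\ge 1$. Suppose the utility function $f:2^E\times O^E\to\mathbb{R}_{\ge0}$ is worst-case monotone and worst-case submodular with respect to the prior $p(\phi)$, and satisfies minimal dependency. Let $\pi^w$ be the adaptive worst-case greedy policy for $(E,\mathcal{I})$ and let $\pi^*_{wc}$ be an optimal worst-case policy for $(E,\mathcal{I})$. Then $$f_{wc}(\pi^w)\ \ge\ \frac{1}{p+1}\,f_{wc}(\pi^*_{wc}).$$
   Context: Setting. $E$ is a finite set of $n$ items and $O$ a finite set of states. A realization is a function $\phi:E\to O$; $p$ is a probability distribution (prior) on the set of all realizations, $\Phi$ denotes a random realization with law $p$, and $U^+=\{\phi: p(\phi)>0\}$. A partial realization is a function $\psi:S\to O$ with $S\subseteq E$, $\mathrm{dom}(\psi)=S$; it is identified with the set of pairs $\{(e,\psi(e)):e\in S\}$, so $\psi\subseteq\psi'$ means $\mathrm{dom}(\psi)\subseteq\mathrm{dom}(\psi')$ and they agree on $\mathrm{dom}(\psi)$. A realization $\phi$ is consistent with $\psi$, written $\phi\sim\psi$, if it agrees with $\psi$ on $\mathrm{dom}(\psi)$. Only partial realizations with $\Pr[\Phi\sim\psi]>0$ are considered, and $p(\phi\mid\psi)=\Pr[\Phi=\phi\mid\Phi\sim\psi]$. For $S\subseteq E$ and a partial realization $\psi$, $f(S,\psi)=\mathbb{E}[f(S,\Phi)\mid\Phi\sim\psi]$. For $e\notin\mathrm{dom}(\psi)$, let $O(e,\psi)=\{o\in O:\exists\phi\text{ with }p(\phi\mid\psi)>0,\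 \phi(e)=o\}$ and define the worst-case marginal utility $f_{wc}(e\mid\psi)=\min_{o\in O(e,\psi)}\{f(\mathrm{dom}(\psi)\cup\{e\},\psi\cup\{(e,o)\})-f(\mathrm{dom}(\psi),\psi)\}$. $f$ is worst-case submodular if $f_{wc}(e\mid\psi)\ge f_{wc}(e\mid\psi')$ for all partial realizations $\psi\subseteq\psi'$ and all $e\in E\setminus\mathrm{dom}(\psi')$; it is worst-case monotone if $f_{wc}(e\mid\psi)\ge0$ for all $\psi$ and $e\notin\mathrm{dom}(\psi)$. $f$ satisfies minimal dependency if $f(\mathrm{dom}(\psi),\psi)=f(\mathrm{dom}(\psi),\phi)$ for every partial realization $\psi$ and every $\phi\in U^+$ with $\phi\sim\psi$. Policies. A (deterministic) policy $\pi$ is a rule which, given the current observation (the partial realization of the items selected so far), either selects a new item or stops; after an item $e$ is selected under realization $\phi$, the state $\phi(e)$ is observed. $E(\pi,\phi)$ is the set of items selected by $\pi$ under $\phi$. The worst-case utility is $f_{wc}(\pi)=\min_{\phi\in U^+}f(E(\pi,\phi),\phi)$. Independence systems. $(E,\mathcal{I})$ with $\mathcal{I}\subseteq 2^E$ is an independence system if $\emptyset\in\mathcal{I}$ and $\mathcal{I}$ is downward closed. For $R\subseteq E$, a base of $R$ is a maximal (under inclusion) set $B\subseteq R$ with $B\in\mathcal{I}$. $(E,\mathcal{I})$ is a $p$-system if for every $R\subseteq E$, $p\cdot\min_B|B|\ge\max_B|B|$, the min and max over bases $B$ of $R$. An optimal worst-case policy $\pi^*_{wc}$ for $(E,\mathcal{I})$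 maximizes $f_{wc}(\pi)$ over all policies $\pi$ with $E(\pi,\phi)\in\mathcal{I}$ for all $\phi\in U^+$. Adaptive worst-case greedy policy $\pi^w$: start with $\psi_0=\emptyset$; at step $t=1,2,\dots$ let $V_t=\{e\in E\setminus\mathrm{dom}(\psi_{t-1}): \mathrm{dom}(\psi_{t-1})\cup\{e\}\in\mathcal{I}\}$; if $V_t=\emptyset$ stop; otherwise select $e_t\in\arg\max_{e\in V_t}f_{wc}(e\mid\psi_{t-1})$ (ties broken arbitrarily), observe $\Phi(e_t)$ and set $\psi_t=\psi_{t-1}\cup\{(e_t,\Phi(e_t))\}$. *)

From HB Require Import structures.
From mathcomp Require Import all_boot all_order all_algebra.
Set Implicit Arguments. Unset Strict Implicit. Unset Printing Implicit Defensive.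
Import Order.TTheory GRing.Theory Num.Theory.
Local Open Scope ring_scope.

Section AdaptiveDefs.
Variables (E O : finType) (R : realFieldType).

Definition realization := {ffun E -> O}.
(* partial realizations: psi e = Some o iff e \in dom psi and psi(e) = o *)
Definition prealization := {ffun E -> option O}.

Definition dom (psi : prealization) : {set E} := [set e | psi e != None].

Definition consistent (phi : realization) (psi : prealization) : bool :=
  [forall e, if psi e is Some o then phi e == o else true].

Definition subpr (psi psi' : prealization) : bool :=
  [forall e, if psi e is Some o then psi' e == Some o else true].

Definition pr0 : prealization := [ffun=> None].

Definition extend (psi : prealization) (e : E) (o : O) : prealization :=
  [ffun x => if x == e then Some o else psi x].

Variable p : realization -> R.

Definition is_prior : Prop := (forall phi, 0 <= p phi) /\ \sum_phi p phi = 1.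

Definition prob_cons (psi : prealization) : R :=
  \sum_(phi | consistent phi psi) p phi.

Definition feasible (psi : prealization) : bool := 0 < prob_cons psi.

Definition cond_prob (phi : realization) (psi : prealization) : R :=
  if consistent phi psi then p phi / prob_cons psi else 0.

Variable f : {set E} -> realization -> R.

Definition condf (S : {set E}) (psi : prealization) : R :=
  (\sum_(phi | consistent phi psi) p phi * f S phi) / prob_cons psi.

Definition Oset (e : E) (psi : prealization) : {set O} :=
  [set o | [exists phi, (0 < cond_prob phi psi) && (phi e == o)]].

Definition marg (e : E) (psi : prealization) (o : O) : R :=
  condf (e |: dom psi) (extend psi e o) - condf (dom psi) psi.

(* worst-case marginal utility f_wc(e | psi): minimum over the (nonempty for
   feasible psi) finite set O(e,psi); the fold is seeded by an element of the
   set, so it is exactly the minimum. Value 0 if the set is empty. *)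
Definition fwc_e (e : E) (psi : prealization) : R :=
  match [pick o in Oset e psi] with
  | Some o0 => \big[Num.min/marg e psi o0]_(o in Oset e psi) marg e psi o
  | None => 0
  end.

Definition wc_submodular : Prop :=
  forall psi psi' e, feasible psi -> feasible psi' -> subpr psi psi' ->
    e \notin dom psi' -> fwc_e e psi' <= fwc_e e psi.

Definition wc_monotone : Prop :=
  forall psi e, feasible psi -> e \notin dom psi -> 0 <= fwc_e e psi.

Definition minimal_dependency : Prop :=
  forall psi phi, feasible psi -> 0 < p phi -> consistent phi psi ->
    condf (dom psi) psi = f (dom psi) phi.

(* deterministic policies: given the current observation, select an item
   (Some e) or stop (None). *)
Definition policy := prealization -> option E.

(* one step of the execution under realization phi; re-selecting an already
   selected item leaves the observation unchanged (a fixed point), i.e. acts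
   as stopping *)
Definition step (pi : policy) (phi : realization) (psi : prealization)
  : prealization :=
  if pi psi is Some e then extend psi e (phi e) else psi.

(* every effective step adds a new item, so #|E| steps reach the end *)
Definition run (pi : policy) (phi : realization) : prealization :=
  iter #|E| (step pi phi) pr0.

Definition selected (pi : policy) (phi : realization) : {set E} :=
  dom (run pi phi).

Definition fwc_pol (pi : policy) : R :=
  match [pick phi | 0 < p phi] with
  | Some phi0 => \big[Num.min/f (selected pi phi0) phi0]_(phi | 0 < p phi)
                    f (selected pi phi) phi
  | None => 0
  end.

Variable I : pred {set E}.

Definition independence_system : Prop :=
  I set0 /\ forall A B : {set E}, A \subset B -> I B -> I A.

Definition is_base (Rs B : {set E}) : Prop :=
  B \subset Rs /\ I B /\
  forall B' : {set E}, B \subset B' -> B' \subset Rs -> I B' -> B' = B.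

(* p-system (parameter k): k * min |B| >= max |B| over bases of every Rs,
   written pairwise over bases *)
Definition k_system (k : nat) : Prop :=
  independence_system /\
  forall Rs B1 B2 : {set E}, is_base Rs B1 -> is_base Rs B2 ->
    (#|B2| <= k * #|B1|)%N.

Definition admissible (pi : policy) : Prop :=
  forall phi, 0 < p phi -> I (selected pi phi).

Definition optimal_wc_policy (pi : policy) : Prop :=
  admissible pi /\ forall pi' : policy, admissible pi' -> fwc_pol pi' <= fwc_pol pi.

Definition wc_greedy (pi : policy) : Prop :=
  forall psi, feasible psi ->
    let V := [set e | (e \notin dom psi) && I (e |: dom psi)] in
    (pi psi = None <-> V = set0) /\
    (forall e, pi psi = Some e ->
       e \in V /\ forall e', e' \in V -> fwc_e e' psi <= fwc_e e psi).

End AdaptiveDefs.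

From HB Require Import structures.
From mathcomp Require Import all_boot all_order all_algebra.
From mathcomp Require Import zify ring lra.
Set Implicit Arguments. Unset Strict Implicit. Unset Printing Implicit Defensive.
Import Order.TTheory GRing.Theory Num.Theory.
Local Open Scope ring_scope.

(* Fix a realization phi of positive probability and run the greedy policy on
   it for #|E| steps; it then has stopped, with selected set S_N.  Let g_t be
   the worst-case gain of the item picked at step t (0 once stopped).
   - By worst-case submodularity the gains g_t are nonincreasing, and by
     minimal dependency they telescope: sum_t g_t <= f(S_N, phi).
   - The exit time of an item e is the first t such that e lies in S_(t+1) or
     cannot be added to it.  For an independent set A, S_t is a base of
     S_t plus the items of A that have exited before t, so the k-system axiom
     gives #{e in A | exit e < t} <= k t; an Abel summation then yields
     sum_(e in A) g_(exit e) <= k sum_t g_t.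
   - An adversary runs the optimal policy on top of the greedy observation,
     answering each new query with a worst-case outcome; each item e it adds
     raises the expected utility by at most g_(exit e).  Some realization phi'
     of positive probability is consistent with the final observation, and the
     optimal policy selects an independent set on phi'.
   Chaining these facts gives f_wc(pi_opt) <= (k+1) f(S_N, phi) for every phi,
   which is the theorem. *)

Section PartialRealizations.
Variables E O : finType.
Implicit Types (psi w c : prealization E O) (phi : realization E O).

Lemma dom_pr0 : dom (pr0 E O) = set0.
Proof. by apply/setP=> x; rewrite !inE ffunE. Qed.

Lemma dom_extend psi e o : dom (extend psi e o) = e |: dom psi.
Proof. by apply/setP=> x; rewrite !inE ffunE; case: (x =P e). Qed.

Lemma consistentP phi psi e o :
  consistent phi psi -> psi e = Some o -> phi e = o.
Proof. by move=> /forallP /(_ e); case: (psi e) => // o' /eqP -> [->]. Qed.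

Lemma consistent_extend phi psi e :
  consistent phi psi -> consistent phi (extend psi e (phi e)).
Proof.
move=> /forallP H; apply/forallP=> x; rewrite ffunE.
by case: eqP => [->|_] //; exact: H.
Qed.

Lemma consistent_subpr phi psi psi' :
  subpr psi psi' -> consistent phi psi' -> consistent phi psi.
Proof.
move=> /forallP Hs /forallP Hc; apply/forallP=> x.
by move: (Hs x) (Hc x); case: (psi x) => // o /eqP ->.
Qed.

Lemma subpr_refl psi : subpr psi psi.
Proof. by apply/forallP=> x; case: (psi x). Qed.

Lemma subpr_trans (a b c : prealization E O) : subpr a b -> subpr b c -> subpr a c.
Proof.
move=> /forallP H1 /forallP H2; apply/forallP=> x.
by move: (H1 x) (H2 x); case: (a x) => // o /eqP ->.
Qed.

Lemma subpr_extend psi e o :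
  (psi e == None) || (psi e == Some o) -> subpr psi (extend psi e o).
Proof.
move=> H; apply/forallP=> x; rewrite ffunE; case: eqP => [->|_].
  by case/orP: H => /eqP ->.
by case: (psi x).
Qed.

Lemma subpr_dom (a b : prealization E O) : subpr a b -> dom a \subset dom b.
Proof.
move=> /forallP H; apply/subsetP=> x; rewrite !inE; move: (H x).
by case: (a x) => // o /eqP ->.
Qed.

Lemma extend_id psi e o : psi e = Some o -> extend psi e o = psi.
Proof. by move=> H; apply/ffunP=> x; rewrite ffunE; case: eqP => [->|]. Qed.

Lemma subpr_extend_both w c e o : subpr w c -> subpr (extend w e o) (extend c e o).
Proof.
by move=> /forallP H; apply/forallP=> x; rewrite !ffunE; case: eqP => // _; exact: H.
Qed.

Lemma extend_subpr w c e o : subpr w c -> c e = Some o -> subpr (extend w e o) c.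
Proof. by move=> H Hc; rewrite -(extend_id Hc); exact: subpr_extend_both. Qed.

Definition restrict phi (A : {set E}) : prealization E O :=
  [ffun x => if x \in A then Some (phi x) else None].

Lemma dom_restrict phi A : dom (restrict phi A) = A.
Proof. by apply/setP=> x; rewrite !inE ffunE; case: (x \in A). Qed.

Lemma consistent_restrict phi A : consistent phi (restrict phi A).
Proof. by apply/forallP=> x; rewrite ffunE; case: (x \in A). Qed.

Lemma extend_restrict phi A e :
  extend (restrict phi A) e (phi e) = restrict phi (e |: A).
Proof. by apply/ffunP=> x; rewrite !ffunE !inE; case: eqP => [->|]. Qed.

End PartialRealizations.

Section Prior.
Variables (E O : finType) (R : realFieldType).
Variable p : realization E O -> R.
Hypothesis p_ge0 : forall phi, 0 <= p phi.
Implicit Types (psi : prealization E O) (phi : realization E O).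

Lemma prob_cons_ge phi psi : consistent phi psi -> p phi <= prob_cons p psi.
Proof.
move=> Hc; rewrite /prob_cons (bigD1 phi) //= lerDl.
by apply: sumr_ge0 => i _; exact: p_ge0.
Qed.

Lemma feasible_consistent phi psi :
  consistent phi psi -> 0 < p phi -> feasible p psi.
Proof. by move=> Hc Hp; apply: lt_le_trans Hp (prob_cons_ge Hc). Qed.

Lemma feasible_witness psi :
  feasible p psi -> exists phi, consistent phi psi && (0 < p phi).
Proof.
move=> Hf; have [/existsP //|/existsPn Hnone] :=
  boolP [exists phi, consistent phi psi && (0 < p phi)].
move: Hf.
rewrite /feasible /prob_cons big1 ?ltxx // => phi Hc.
by apply/eqP; rewrite eq_le p_ge0 andbT leNgt; move: (Hnone phi); rewrite Hc.
Qed.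

Lemma mem_Oset phi psi e :
  consistent phi psi -> 0 < p phi -> phi e \in Oset p e psi.
Proof.
move=> Hc Hp; rewrite inE; apply/existsP; exists phi; rewrite eqxx andbT.
by rewrite /cond_prob Hc divr_gt0 //; exact: feasible_consistent Hc Hp.
Qed.

Lemma Oset_feasible psi e o : o \in Oset p e psi -> feasible p (extend psi e o).
Proof.
rewrite inE => /existsP [phi /andP [H /eqP He]].
move: H; rewrite /cond_prob; case: ifP => Hc; last by rewrite ltxx.
move=> H; apply: (@feasible_consistent phi).
  by rewrite -He; exact: consistent_extend.
by rewrite lt_def p_ge0 andbT; apply/eqP=> H0; move: H; rewrite H0 mul0r ltxx.
Qed.

Section WorstCase.
Variable f : {set E} -> realization E O -> R.

Lemma fwc_le_marg psi e o : o \in Oset p e psi -> fwc_e p f e psi <= marg p f e psi o.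
Proof.
move=> Ho; rewrite /fwc_e; case: pickP => [o0 _|]; last by move/(_ o); rewrite Ho.
exact: (bigmin_le_cond _ (fun o => marg p f e psi o) Ho).
Qed.

Lemma fwc_attained psi e o : o \in Oset p e psi ->
  exists2 o', o' \in Oset p e psi & marg p f e psi o' = fwc_e p f e psi.
Proof.
move=> Ho; rewrite /fwc_e; case: pickP => [o0 Ho0|]; last by move/(_ o); rewrite Ho.
pose P y := exists2 o', o' \in Oset p e psi & marg p f e psi o' = y.
apply: (@big_ind _ P); first by exists o0.
  move=> x y [a Ha <-] [b Hb <-]; rewrite /Num.min.
  by case: ifP => _; [exists a | exists b].
by move=> i Hi; exists i.
Qed.

Definition worst_outcome (o0 : O) psi e : O :=
  odflt o0 [pick o in Oset p e psi | marg p f e psi o == fwc_e p f e psi].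

Lemma worst_outcome_spec o0 psi e : feasible p psi ->
  worst_outcome o0 psi e \in Oset p e psi /\
  marg p f e psi (worst_outcome o0 psi e) = fwc_e p f e psi.
Proof.
move=> Hf; have [phi /andP [Hc Hp]] := feasible_witness Hf.
rewrite /worst_outcome; case: pickP => [o /andP [Ho /eqP Hm] //|Hnone].
have [o' Ho' Hm] := fwc_attained (mem_Oset e Hc Hp).
by move: (Hnone o'); rewrite Ho' Hm eqxx.
Qed.

Section Monotone.
Hypothesis Hmon : wc_monotone p f.
Hypothesis Hmd : minimal_dependency p f.

Lemma condf_consistent phi psi :
  consistent phi psi -> 0 < p phi -> condf p f (dom psi) psi = f (dom psi) phi.
Proof. by move=> Hc Hp; apply: Hmd => //; exact: feasible_consistent Hc Hp. Qed.

Lemma f_monotone1 phi (A : {set E}) e : 0 < p phi -> f A phi <= f (e |: A) phi.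
Proof.
move=> Hp; have [HeA|HeA] := boolP (e \in A).
  by rewrite (setUidPr _) // sub1set.
have Hc := consistent_restrict phi A.
have Hd : e \notin dom (restrict phi A) by rewrite dom_restrict.
have Hgain := le_trans (Hmon (feasible_consistent Hc Hp) Hd)
                       (fwc_le_marg (mem_Oset e Hc Hp)).
move: Hgain; rewrite /marg extend_restrict !dom_restrict subr_ge0.
have := condf_consistent (consistent_restrict phi (e |: A)) Hp.
have := condf_consistent Hc Hp.
by rewrite !dom_restrict => -> ->.
Qed.

Lemma f_monotone phi (A B : {set E}) : 0 < p phi -> A \subset B -> f A phi <= f B phi.
Proof.
move=> Hp; move Hn : #|B :\: A| => n; elim: n A Hn => [|n IH] A Hn HAB.
  suff -> : B = A by [].
  apply/eqP; rewrite eqEsubset HAB andbT -setD_eq0; apply/eqP.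
  exact: cards0_eq.
have /card_gt0P [e] : (0 < #|B :\: A|)%N by rewrite Hn.
rewrite inE => /andP [HeA HeB].
apply: le_trans (f_monotone1 A e Hp) _; apply: IH.
  move: Hn; rewrite (cardsD1 e (B :\: A)) inE HeA HeB add1n => -[<-].
  by apply: eq_card => x; rewrite !inE; case: (x == e); rewrite ?andbF.
by apply/subsetP=> x; rewrite !inE => /orP [/eqP ->|/(subsetP HAB)].
Qed.

End Monotone.
End WorstCase.
End Prior.

Lemma sum_subset_le (T : finType) (R : realFieldType) (A B : {set T}) (F : T -> R) :
  A \subset B -> (forall e, 0 <= F e) -> \sum_(e in A) F e <= \sum_(e in B) F e.
Proof.
move=> HAB HF; rewrite [X in _ <= X](big_setID A) /= (setIidPr HAB) lerDl.
exact: sumr_ge0.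
Qed.

Section AbelSummation.
Variables (T : finType) (R : realFieldType).
Variables (A : {set T}) (rank : T -> nat) (w : nat -> R) (k N : nat).
Hypothesis w_ge0 : forall t, 0 <= w t.
Hypothesis w_noninc : forall t, w t.+1 <= w t.
Hypothesis rank_lt : forall e, e \in A -> (rank e < N)%N.
Hypothesis rank_count :
  forall i, (i <= N)%N -> (#|[set e in A | (rank e < i)%N]| <= k * i)%N.

Let below i := [set e in A | (rank e < i)%N].
Let level i := [set e in A | rank e == i].

Lemma sum_below_split i (F : T -> R) :
  \sum_(e in below i.+1) F e = \sum_(e in below i) F e + \sum_(e in level i) F e.
Proof.
rewrite (bigID (fun e => (rank e < i)%N)) /=; congr (_ + _); apply: eq_bigl => e;
  by rewrite !inE; case: (e \in A); rewrite //= ltnS; case: ltngtP.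
Qed.

(* The invariant of the summation: the unused capacity k i - #|below i|
   is charged at the current weight w i. *)
Lemma abel_partial i : (i <= N)%N ->
  \sum_(e in below i) w (rank e) + ((k * i)%:R - #|below i|%:R) * w i
    <= k%:R * \sum_(t < i) w t.
Proof.
elim: i => [|i IH] Hi.
  have -> : below 0 = set0 by apply/setP=> e; rewrite !inE ltn0 andbF.
  by rewrite big_set0 cards0 muln0 subrr mul0r addr0 big_ord0 mulr0.
have IH' := IH (ltnW Hi).
have Hlevel : \sum_(e in level i) w (rank e) = #|level i|%:R * w i.
  rewrite (eq_bigr (fun _ => w i)); last by move=> e; rewrite inE => /andP [_ /eqP ->].
  by rewrite sumr_const mulr_natl.
have Hcard : (#|below i.+1|%:R : R) = #|below i|%:R + #|level i|%:R.
  have card_sum (B : {set T}) : (#|B|%:R : R) = \sum_(e in B) 1 by rewrite sumr_const.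
  by rewrite !card_sum sum_below_split.
have Hcap : (0 : R) <= (k * i.+1)%:R - #|below i.+1|%:R.
  by rewrite subr_ge0 ler_nat; apply: rank_count.
have Hstep := ler_wpM2l Hcap (w_noninc i).
rewrite sum_below_split Hlevel big_ord_recr /=.
move: Hstep IH'; rewrite Hcard !natrM !mulrS.
set a := (#|below i|%:R : R); set b := (#|level i|%:R : R).
set s := \sum_(e in below i) w (rank e); set S := \sum_(t < i) w t.
move=> Hstep IH'.
have -> : k%:R * (S + w i) = k%:R * S + k%:R * w i by ring.
nra.
Qed.

Lemma abel_summation : \sum_(e in A) w (rank e) <= k%:R * \sum_(t < N) w t.
Proof.
have HA : below N = A.
  by apply/setP=> e; rewrite inE; case He: (e \in A); rewrite //= rank_lt.
have := abel_partial (leqnn N); rewrite HA.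
have : 0 <= ((k * N)%:R - #|A|%:R) * w N.
  by apply: mulr_ge0 => //; rewrite subr_ge0 ler_nat -{1}HA; exact: rank_count.
set s := \sum_(e in A) _; lra.
Qed.

End AbelSummation.

Lemma fwc_pol_le (E O : finType) (R : realFieldType) (p : realization E O -> R)
  (f : {set E} -> realization E O -> R) (pi : policy E O) phi :
  0 < p phi -> fwc_pol p f pi <= f (selected pi phi) phi.
Proof.
move=> H; rewrite /fwc_pol; case: pickP => [phi0 _|Hn]; last by move: (Hn phi); rewrite H.
exact: (bigmin_le_cond _ (fun phi => f (selected pi phi) phi) H).
Qed.

Lemma fwc_pol_ge (E O : finType) (R : realFieldType) (p : realization E O -> R)
  (f : {set E} -> realization E O -> R) (pi : policy E O) (x : R) :
  (exists phi, 0 < p phi) ->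
  (forall phi, 0 < p phi -> x <= f (selected pi phi) phi) -> x <= fwc_pol p f pi.
Proof.
move=> [phi Hp] Hx; rewrite /fwc_pol; case: pickP => [phi0 H0|Hn].
  by apply: le_bigmin; [exact: Hx | move=> i Hi; exact: Hx].
by move: (Hn phi); rewrite Hp.
Qed.

Lemma prior_support (E O : finType) (R : realFieldType) (p : realization E O -> R) :
  is_prior p -> exists phi, 0 < p phi.
Proof.
move=> [p_ge0 psum1]; have [/existsP //|/existsPn Hnone] := boolP [exists phi, 0 < p phi].
suff : \sum_phi p phi = 0 by rewrite psum1 => /eqP; rewrite oner_eq0.
apply: big1 => phi _; apply/eqP; rewrite eq_le p_ge0 andbT.
by move: (Hnone phi); rewrite ltNge negbK.
Qed.

Section GreedyRun.
Variables (E O : finType) (R : realFieldType).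
Variable p : realization E O -> R.
Variable f : {set E} -> realization E O -> R.
Variable I : pred {set E}.
Variable pi : policy E O.
Variable phi : realization E O.
Hypothesis p_ge0 : forall phi, 0 <= p phi.
Hypothesis f_ge0 : forall S phi, 0 <= f S phi.
Hypothesis Hmon : wc_monotone p f.
Hypothesis Hsub : wc_submodular p f.
Hypothesis Hmd : minimal_dependency p f.
Hypothesis Hind : independence_system I.
Hypothesis Hgreedy : wc_greedy p f I pi.
Hypothesis Hp : 0 < p phi.

Local Notation N := #|E|.

Definition gobs t := iter t (step pi phi) (pr0 E O).
Definition gsel t := dom (gobs t).
Definition candidates (psi : prealization E O) :=
  [set e | (e \notin dom psi) && I (e |: dom psi)].
Definition gain t := if pi (gobs t) is Some e then fwc_e p f e (gobs t) else 0.

Lemma indep_sub (A B : {set E}) : A \subset B -> I B -> I A.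
Proof. by case: Hind => _; apply. Qed.

Lemma gobsS t : gobs t.+1 = step pi phi (gobs t).
Proof. by rewrite /gobs iterS. Qed.

Lemma gobs_consistent t : consistent phi (gobs t).
Proof.
elim: t => [|t IH]; first by apply/forallP=> x; rewrite ffunE.
by rewrite gobsS /step; case: (pi _) => // e; exact: consistent_extend.
Qed.

Lemma gobs_feasible t : feasible p (gobs t).
Proof. exact: (feasible_consistent p_ge0 (gobs_consistent t) Hp). Qed.

Lemma greedy_pick t e : pi (gobs t) = Some e ->
  [/\ e \notin gsel t, I (e |: gsel t), gsel t.+1 = e |: gsel t &
      forall e', e' \in candidates (gobs t) ->
        fwc_e p f e' (gobs t) <= fwc_e p f e (gobs t)].
Proof.
move=> H; have [_ /(_ e H) [HV Hmax]] := Hgreedy (gobs_feasible t).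
move: HV; rewrite inE => /andP [H1 H2]; split => //.
by rewrite /gsel gobsS /step H dom_extend.
Qed.

Lemma gobs_subpr1 t : subpr (gobs t) (gobs t.+1).
Proof.
rewrite gobsS /step; case H: (pi _) => [e|]; last exact: subpr_refl.
case: (greedy_pick H) => He _ _ _; apply: subpr_extend.
by move: He; rewrite inE negbK => ->.
Qed.

Lemma gobs_subpr t s : (t <= s)%N -> subpr (gobs t) (gobs s).
Proof.
move/subnK <-; elim: (s - t)%N => [|m IH]; first exact: subpr_refl.
by rewrite addSn; apply: subpr_trans IH (gobs_subpr1 _).
Qed.

Lemma gsel_sub t s : (t <= s)%N -> gsel t \subset gsel s.
Proof. by move=> H; apply: subpr_dom; exact: gobs_subpr. Qed.

Lemma gsel_indep t : I (gsel t).
Proof.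
elim: t => [|t IH]; first by rewrite /gsel /gobs /= dom_pr0; case: Hind.
case H: (pi (gobs t)) => [e|]; first by case: (greedy_pick H) => _ ? -> _.
by rewrite /gsel gobsS /step H.
Qed.

Lemma gobs_stopped t m : pi (gobs t) = None -> gobs (m + t) = gobs t.
Proof. by move=> H; elim: m => [|m IH] //; rewrite addSn gobsS IH /step H. Qed.

Lemma gsel_card t : (#|gsel t| <= t)%N.
Proof.
elim: t => [|t IH]; first by rewrite /gsel /gobs /= dom_pr0 cards0.
case H: (pi (gobs t)) => [e|]; last by rewrite /gsel gobsS /step H; apply: leqW.
by case: (greedy_pick H) => _ _ -> _; rewrite cardsU1; case: (_ \notin _); lia.
Qed.

(* Every effective step adds an item, so after #|E| steps greedy has stopped. *)
Lemma greedy_stops : pi (gobs N) = None.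
Proof.
case HN: (pi (gobs N)) => [e|] //; exfalso.
have Hrun t : (t <= N)%N -> pi (gobs t) != None.
  move=> Ht; apply/eqP=> Ht0; have := gobs_stopped (N - t) Ht0; rewrite subnK //.
  by move=> /(f_equal pi); rewrite HN Ht0.
have Hcard t : (t <= N)%N -> #|gsel t| = t.
  elim: t => [|t IH] Ht; first by rewrite /gsel /gobs /= dom_pr0 cards0.
  move: (Hrun t (ltnW Ht)); case H: (pi (gobs t)) => [e'|] // _.
  by case: (greedy_pick H) => Hn _ -> _; rewrite cardsU1 Hn IH // ltnW.
case: (greedy_pick HN) => Hn _ _ _; move: Hn.
suff -> : gsel N = setT by rewrite inE.
by apply/eqP; rewrite eqEcard subsetT cardsT Hcard ?leqnn.
Qed.

Lemma gobs_after t : (N <= t)%N -> gobs t = gobs N.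
Proof. by move=> H; rewrite -(subnK H); apply: gobs_stopped; exact: greedy_stops. Qed.

Lemma greedy_final_candidates : candidates (gobs N) = set0.
Proof. by have [[H _] _] := Hgreedy (gobs_feasible N); apply: H; exact: greedy_stops. Qed.

Lemma gain_ge0 t : 0 <= gain t.
Proof.
rewrite /gain; case H: (pi _) => [e|] //.
by case: (greedy_pick H) => He _ _ _; exact: Hmon (gobs_feasible t) He.
Qed.

(* The greedy gains are nonincreasing: the item picked at t+1 was already a
   candidate at t, and its worst-case gain can only have decreased. *)
Lemma gain_noninc t : gain t.+1 <= gain t.
Proof.
rewrite {1}/gain; case H: (pi (gobs t.+1)) => [e'|]; last exact: gain_ge0.
case H0: (pi (gobs t)) => [e|]; last by move: H; rewrite gobsS /step H0 H0.
rewrite /gain H0.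
case: (greedy_pick H) => He' HI' _ _; case: (greedy_pick H0) => _ _ _ Hmax.
apply: le_trans (Hsub (gobs_feasible t) (gobs_feasible t.+1) (gobs_subpr1 t) He') _.
apply: Hmax; rewrite inE; apply/andP; split.
  by apply: contra He'; apply: (subsetP (gsel_sub (leqnSn t))).
by apply: indep_sub HI'; apply: setUS; apply: gsel_sub.
Qed.

(* The gains telescope to at most the final utility of the greedy set. *)
Lemma gain_sum_le : \sum_(t < N) gain t <= f (gsel N) phi.
Proof.
suff H t : \sum_(s < t) gain s <= f (gsel t) phi by [].
elim: t => [|t IH]; first by rewrite big_ord0; exact: f_ge0.
rewrite big_ord_recr /=.
suff : gain t <= f (gsel t.+1) phi - f (gsel t) phi by lra.
rewrite /gain; case H: (pi (gobs t)) => [e|]; last by rewrite /gsel gobsS /step H subrr.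
rewrite /gsel -(condf_consistent p_ge0 Hmd (gobs_consistent t) Hp).
rewrite -(condf_consistent p_ge0 Hmd (gobs_consistent t.+1) Hp).
apply: le_trans (fwc_le_marg f (mem_Oset p_ge0 e (gobs_consistent t) Hp)) _.
by rewrite /marg gobsS /step H dom_extend.
Qed.

Definition exited e t := (e \in gsel t.+1) || ~~ I (e |: gsel t.+1).

Lemma exited_eventually e : exists t, exited e t.
Proof.
exists N; rewrite /exited /gsel (gobs_after (leqnSn N)).
case: (boolP (e \in dom (gobs N))) => //= He.
have : e \notin candidates (gobs N) by rewrite greedy_final_candidates inE.
by rewrite inE He.
Qed.

Definition exit_time e := ex_minn (exited_eventually e).

Lemma exit_time_candidate e : I [set e] -> e \in candidates (gobs (exit_time e)).
Proof.
move=> HI; rewrite /exit_time; case: ex_minnP => [[|s] _ Hmin].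
  by rewrite inE /gobs /= dom_pr0 inE setU0 HI.
have : ~~ exited e s by apply/negP=> /Hmin; rewrite ltnn.
rewrite /exited /gsel /candidates in_set.
by case: (e \in dom (gobs s.+1)); case: (I (e |: dom (gobs s.+1))).
Qed.

Lemma exit_time_lt e : I [set e] -> (exit_time e < N)%N.
Proof.
move=> HI; have HV := exit_time_candidate HI; rewrite ltnNge; apply/negP=> Hle.
by move: HV; rewrite (gobs_after Hle) greedy_final_candidates inE.
Qed.

Lemma exited_after e t : (exit_time e < t)%N -> (e \in gsel t) || ~~ I (e |: gsel t).
Proof.
move=> Ht; have : exited e (exit_time e) by rewrite /exit_time; case: ex_minnP.
have Hs := gsel_sub Ht.
case/orP=> [H|H]; first by rewrite (subsetP Hs _ H).
by apply/orP; right; apply: contra H; apply: indep_sub; exact: setUS.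
Qed.

(* Worst-case submodularity: beyond the greedy observation, adding e gains
   at most the greedy gain at the exit time of e. *)
Lemma fwc_le_exit_gain e psi : I [set e] -> feasible p psi -> subpr (gobs N) psi ->
  e \notin dom psi -> fwc_e p f e psi <= gain (exit_time e).
Proof.
move=> HI Hf Hs He.
have Hs' : subpr (gobs (exit_time e)) psi.
  by apply: subpr_trans Hs; apply: gobs_subpr; apply: ltnW; exact: exit_time_lt.
apply: le_trans (Hsub (gobs_feasible _) Hf Hs' He) _.
have HV := exit_time_candidate HI; rewrite /gain.
case H: (pi (gobs (exit_time e))) => [g|]; first by case: (greedy_pick H) => _ _ _; apply.
have [[Hnone _] _] := Hgreedy (gobs_feasible (exit_time e)).
by move: HV; rewrite /candidates (Hnone H) inE.
Qed.

Section KSystem.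
Variable k : nat.
Hypothesis Hbases : forall Rs B1 B2, is_base I Rs B1 -> is_base I Rs B2 ->
  (#|B2| <= k * #|B1|)%N.

(* The greedy set S_i is a base of S_i plus the items of A exited before i,
   which contains the independent set of those items. *)
Lemma exited_count (A : {set E}) i :
  I A -> (#|[set e in A | (exit_time e < i)%N]| <= k * i)%N.
Proof.
move=> HA; set X := [set e in A | _]; set Rs := gsel i :|: X.
have HIX : I X by apply: indep_sub HA; apply/subsetP=> e; rewrite inE => /andP [].
have Hb1 : is_base I Rs (gsel i).
  split; first exact: subsetUl.
  split=> [|B' H1 H2 H3]; first exact: gsel_indep.
  apply/eqP; rewrite eqEsubset H1 andbT; apply/subsetP=> x Hx.
  move: (subsetP H2 _ Hx); rewrite inE => /orP [//|]; rewrite inE => /andP [_ Hsx].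
  case/orP: (exited_after Hsx) => // /negP []; apply: indep_sub H3.
  by apply/subsetP=> y; rewrite in_setU1 => /orP [/eqP -> //|]; exact: (subsetP H1).
pose P (B : {set E}) := [&& X \subset B, B \subset Rs & I B].
have HP : P X by rewrite /P subxx subsetUr HIX.
case: (@arg_maxnP _ X P (fun B : {set E} => #|B|) HP) => B2 /and3P [HXB HBR HIB] Hmax.
have Hb2 : is_base I Rs B2.
  split => //; split => // B' H1 H2 H3.
  have HPB' : P B' by rewrite /P (subset_trans HXB H1) H2 H3.
  by apply/eqP; rewrite eq_sym eqEcard H1; exact: Hmax.
apply: leq_trans (subset_leq_card HXB) _; apply: leq_trans (Hbases Hb1 Hb2) _.
by apply: leq_mul => //; exact: gsel_card.
Qed.

Lemma exit_gain_sum_le (A : {set E}) : I A ->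
  \sum_(e in A) gain (exit_time e) <= k%:R * f (gsel N) phi.
Proof.
move=> HA.
have Hlt e : e \in A -> (exit_time e < N)%N.
  by move=> He; apply: exit_time_lt; apply: indep_sub HA; rewrite sub1set.
apply: le_trans (abel_summation gain_ge0 gain_noninc Hlt (fun i _ => exited_count i HA)) _.
by apply: ler_wpM2l; [exact: ler0n | exact: gain_sum_le].
Qed.

End KSystem.

Section Adversary.
Variable piopt : policy E O.
Local Notation G0 := (gobs N).

(* The adversary runs piopt from scratch (second component) while keeping a
   combined observation (first component) that starts at the greedy one;
   a query already answered there is answered accordingly, a new one by a
   worst-case outcome. *)
Definition adversary_step (st : prealization E O * prealization E O) :=
  let (c, w) := st in
  match piopt w with
  | Some e => if e \in dom w then (c, w) else
      let o := if c e is Some o then o else worst_outcome p f (phi e) c e in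
      (extend c e o, extend w e o)
  | None => (c, w)
  end.

Definition adversary j := iter j adversary_step (G0, pr0 E O).

Definition adversary_inv (st : prealization E O * prealization E O) :=
  [/\ feasible p st.1, subpr st.2 st.1, subpr G0 st.1 & dom st.1 = dom G0 :|: dom st.2].

Lemma adversary_invariant j : adversary_inv (adversary j).
Proof.
elim: j => [|j IH].
  split; [exact: gobs_feasible | by apply/forallP=> x; rewrite ffunE
         | exact: subpr_refl | by rewrite /= dom_pr0 setU0].
rewrite /adversary iterS -/(adversary j); move: IH.
case: (adversary j) => c w [Hf Hwc HGc Hd] /=.
case: (piopt w) => [e|] //; case: ifP => // Hew.
case Hce: (c e) => [o|].
  have Hdc : e \in dom c by rewrite inE Hce.
  rewrite (extend_id Hce); split => //=; first exact: extend_subpr.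
  by rewrite dom_extend setUCA -Hd; symmetry; apply/setUidPr; rewrite sub1set.
have [Ho _] := worst_outcome_spec p_ge0 f (phi e) e Hf.
split => /=.
- exact: Oset_feasible.
- exact: subpr_extend_both.
- by apply: subpr_trans HGc (subpr_extend _); rewrite Hce.
- by rewrite !dom_extend Hd setUCA.
Qed.

Lemma adversary_subpr1 j :
  subpr (adversary j).1 (adversary j.+1).1 /\ subpr (adversary j).2 (adversary j.+1).2.
Proof.
rewrite /adversary iterS -/(adversary j); case: (adversary j) => c w /=.
case: (piopt w) => [e|] /=; last by split; exact: subpr_refl.
case: ifP => Hew /=; first by split; exact: subpr_refl.
have Hwe : w e == None by move: Hew; rewrite inE => /negbT; rewrite negbK.
by case Hce: (c e) => [o|]; split; apply: subpr_extend; rewrite ?Hce ?Hwe ?eqxx ?orbT.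
Qed.

Lemma adversary_subpr j s : (j <= s)%N ->
  subpr (adversary j).1 (adversary s).1 /\ subpr (adversary j).2 (adversary s).2.
Proof.
move/subnK <-; elim: (s - j)%N => [|m [IH1 IH2]]; first by split; exact: subpr_refl.
rewrite addSn; case: (adversary_subpr1 (m + j)) => H1 H2.
by split; [exact: subpr_trans IH1 H1 | exact: subpr_trans IH2 H2].
Qed.

Lemma opt_run_adversary phi' j : consistent phi' (adversary N).1 -> (j <= N)%N ->
  iter j (step piopt phi') (pr0 E O) = (adversary j).2.
Proof.
move=> Hphi'; elim: j => [|j IH] Hj //.
rewrite iterS IH ?(ltnW Hj) //.
have Hc1 : consistent phi' (adversary j.+1).1.
  by apply: consistent_subpr Hphi'; case: (adversary_subpr Hj).
have Hc0 : consistent phi' (adversary j).1.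
  by apply: consistent_subpr Hc1; case: (adversary_subpr1 j).
have [_ Hwc _ _] := adversary_invariant j.
move: Hc1; rewrite /adversary iterS -/(adversary j); move: Hc0 Hwc.
case: (adversary j) => c w /= Hc0 Hwc; rewrite /step.
case: (piopt w) => [e|] //; case: ifP => Hew /=.
  move=> _; move: Hew; rewrite inE; case Hwe: (w e) => [o|] // _.
  apply: extend_id; rewrite Hwe; congr Some; symmetry.
  exact: consistentP (consistent_subpr Hwc Hc0) Hwe.
by move=> Hc1; congr extend; apply: consistentP Hc1 _; rewrite ffunE eqxx.
Qed.

Lemma adversary_value_le j : I (dom (adversary N).2) -> (j <= N)%N ->
  condf p f (dom (adversary j).1) (adversary j).1 - condf p f (dom G0) G0 <=
  \sum_(e in dom (adversary j).1 :\: dom G0) gain (exit_time e).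
Proof.
move=> HIO; elim: j => [|j IH] Hj; first by rewrite /adversary /= subrr setDv big_set0.
have IH' := IH (ltnW Hj).
have Hw : dom (adversary j.+1).2 \subset dom (adversary N).2.
  by apply: subpr_dom; case: (adversary_subpr Hj).
have [Hf _ HGc _] := adversary_invariant j.
move: Hw IH'; rewrite /adversary iterS -/(adversary j); move: Hf HGc.
case: (adversary j) => c w /= Hf HGc.
case: (piopt w) => [e|] //; case: ifP => Hew //=.
case Hce: (c e) => [o|]; first by rewrite (extend_id Hce).
move=> Hw IH'.
have Hec : e \notin dom c by rewrite inE Hce.
have HI1 : I [set e].
  apply: indep_sub HIO; rewrite sub1set; apply: (subsetP Hw).
  by rewrite dom_extend setU11.
have [_ Hm] := worst_outcome_spec p_ge0 f (phi e) e Hf.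
have Hgain := fwc_le_exit_gain HI1 Hf HGc Hec.
have -> : dom (extend c e (worst_outcome p f (phi e) c e)) :\: dom G0
          = e |: (dom c :\: dom G0).
  rewrite dom_extend setDUl; congr (_ :|: _); apply/setDidPl; rewrite disjoints1.
  by apply: contra Hec; apply: (subsetP (subpr_dom HGc)).
rewrite big_setU1 /=; last by rewrite inE negb_and Hec orbT.
by move: Hm Hgain; rewrite /marg dom_extend => Hm Hgain; lra.
Qed.

Lemma adversary_realization : exists2 phi', 0 < p phi' &
  I (selected piopt phi') ->
  f (selected piopt phi') phi' <=
    f (gsel N) phi + \sum_(e in selected piopt phi') gain (exit_time e).
Proof.
have [Hf _ _ Hd] := adversary_invariant N.
have [phi' /andP [Hc Hp']] := feasible_witness p_ge0 Hf.
exists phi' => //; rewrite /selected /run (opt_run_adversary Hc (leqnn N)) => HIO.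
have Hmono : f (dom (adversary N).2) phi' <= f (dom (adversary N).1) phi'.
  by apply: (f_monotone p_ge0 Hmon Hmd Hp'); rewrite Hd subsetUr.
have := adversary_value_le HIO (leqnn N).
rewrite (condf_consistent p_ge0 Hmd Hc Hp').
rewrite (condf_consistent p_ge0 Hmd (gobs_consistent N) Hp) -/(gsel N).
have : \sum_(e in dom (adversary N).1 :\: dom G0) gain (exit_time e) <=
       \sum_(e in dom (adversary N).2) gain (exit_time e).
  apply: sum_subset_le => [|e]; last exact: gain_ge0.
  by apply/subsetP=> x; rewrite Hd !inE => /andP [/negbTE ->].
lra.
Qed.

End Adversary.
End GreedyRun.

Unset Implicit Arguments.
Set Strict Implicit.

Theorem theorem1 (E O : finType) (R : realFieldType)
  (I : pred {set E}) (k : nat)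
  (p : {ffun E -> O} -> R) (f : {set E} -> {ffun E -> O} -> R)
  (pi_w pi_opt : {ffun E -> option O} -> option E) :
  (1 <= k)%N ->
  k_system I k ->
  is_prior p ->
  (forall S phi, 0 <= f S phi) ->
  wc_monotone p f ->
  wc_submodular p f ->
  minimal_dependency p f ->
  wc_greedy p f I pi_w ->
  optimal_wc_policy p f I pi_opt ->
  fwc_pol p f pi_opt / (k.+1)%:R <= fwc_pol p f pi_w.
Proof.
move=> _ [Hind Hbases] Hprior f_ge0 Hmon Hsub Hmd Hg [Hadm _].
have p_ge0 := proj1 Hprior.
apply: fwc_pol_ge; first exact: prior_support Hprior.
move=> phi Hp; rewrite ler_pdivrMr ?ltr0Sn // mulrC -natr1 mulrDl mul1r.
have [phi' Hp' Hvalue] :=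
  adversary_realization p_ge0 Hmon Hsub Hmd Hind Hg Hp pi_opt.
have HIO := Hadm phi' Hp'.
have Hopt := fwc_pol_le f pi_opt Hp'.
have Hexit := exit_gain_sum_le p_ge0 f_ge0 Hmon Hsub Hmd Hind Hg Hp Hbases HIO.
have := Hvalue HIO; lra.
Qed.
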